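(* Under the hypotheses of the previous statement (with $P$ analytic in $\{\operatorname{Re}z>0\}$, $a>0$, $|P(z)|<M(\delta)e^{-a|z|}$ on $S(-\tfrac{\pi}{2}+\delta,\tfrac{\pi}{2}-\delta)$ for each $\delta\in(0,\tfrac{\pi}{2})$), let $F$ be the entire function that coincides with $F_\theta(t)=\int_{\arg z=\theta}e^{zt}P(z)\,dz$ on $\Pi_{\theta,a}$ for every $\theta\in(-\tfrac{\pi}{2},\tfrac{\pi}{2})$. Then for every $\delta\in(0,\tfrac{\pi}{2})$, $$|F(t)|\le \frac{2M(\delta)}{a}\quad\text{for all } t\in \overline{\Pi_{\pi/2-\delta,a/2}}\cup\overline{\Pi_{-\pi/2+\delta,a/2}},$$ i.e. outside the open sector with apex $\frac{a}{2\sin\delta}$ on the positive real axis, symmetric about the real axis, with half-opening $\delta$, containing $(\frac{a}{2\sin\delta},+\infty)$. In particular $|F(|t|e^{\pm i\delta})|\le 2M(\delta)/a$ for all $t$. Moreover $F(t)\to0$ as $t\to-\infty$ along the real axis.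
   Context: For $\alpha<\beta$, $S(\alpha,\beta)=\{z\in\mathbb{C}:0<|z|<\infty,\ \alpha<\arg z<\beta\}$. For $\theta\in(-\tfrac{\pi}{2},\tfrac{\pi}{2})$ and $c>0$, $\Pi_{\theta,c}=\{t=\sigma+i\tau:\ \sigma\cos\theta-\tau\sin\theta<c\}$, and $\overline{\Pi_{\theta,c}}$ is its closure. *)

From Stdlib Require Export Reals.
From Coquelicot Require Export Coquelicot.
Open Scope R_scope.

Definition cexp (z : C) : C :=
  (exp (Re z) * cos (Im z), exp (Re z) * sin (Im z)).

Definition cis (phi : R) : C := (cos phi, sin phi).

Definition holomorphic_on (D : C -> Prop) (f : C -> C) : Prop :=
  forall z : C, D z -> ex_derive (K := C_AbsRing) (V := C_NormedModule) f z.

Definition entire (f : C -> C) : Prop := holomorphic_on (fun _ => True) f.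

Definition right_half_plane (z : C) : Prop := 0 < Re z.

(* S(alpha, beta) = { z : 0 < |z| < oo, alpha < arg z < beta }, written in
   polar form (for -pi < alpha < beta <= pi this is exactly the principal-arg
   condition). *)
Definition sector (alpha beta : R) (z : C) : Prop :=
  exists r phi : R, 0 < r /\ alpha < phi < beta /\ z = (RtoC r * cis phi)%C.

Definition Pi_open (theta c : R) (t : C) : Prop :=
  Re t * cos theta - Im t * sin theta < c.

Definition Pi_closed (theta c : R) (t : C) : Prop :=
  Re t * cos theta - Im t * sin theta <= c.

(* integrand of F_theta(t) = \int_{arg z = theta} e^{zt} P(z) dz,
   parametrized by z = r e^{i theta}, dz = e^{i theta} dr, r in [0,oo) *)
Definition ray_integrand (P : C -> C) (theta : R) (t : C) (r : R) : C :=
  (cexp (RtoC r * cis theta * t) * P (RtoC r * cis theta) * cis theta)%C.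

Definition is_F_theta (P : C -> C) (theta : R) (t l : C) : Prop :=
  is_RInt_gen (ray_integrand P theta t) (at_point 0) (Rbar_locally p_infty) l.

(* Parametrize the ray arg z = theta by z = r e^{i theta}.  Then
   |e^{zt}| = e^{r c} with c = Re t cos theta - Im t sin theta, so the
   exponential decay of P gives |F_theta(t)| <= M(delta) / (a - c) whenever
   theta lies strictly inside (-pi/2 + delta, pi/2 - delta).  At the two
   endpoints theta = +-(pi/2 - delta) the integral is not available, but the
   bound |F(t)| (a - c_theta(t)) <= M(delta) passes to the limit since c is
   continuous in theta; on the closed half-planes where c <= a/2 this is the
   bound 2 M(delta) / a.  On the real axis (theta = 0, c = x) the same estimate
   M / (a - x) tends to 0 as x -> -oo. *)

From Stdlib Require Import Reals Lra.
From Coquelicot Require Import Coquelicot.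
Open Scope R_scope.

Definition Pi_level (theta : R) (t : C) : R := Re t * cos theta - Im t * sin theta.

Lemma Pi_level_polar (theta r phi : R) :
  Pi_level theta (RtoC r * cis phi)%C = r * cos (phi + theta).
Proof. unfold Pi_level, cis, RtoC, Re, Im; simpl. rewrite cos_plus. ring. Qed.

Lemma Pi_level_real (x : R) : Pi_level 0 (RtoC x) = x.
Proof. unfold Pi_level, RtoC, Re, Im; simpl. rewrite cos_0, sin_0. ring. Qed.

Lemma Pi_closed_ray (theta phi r c : R) :
  cos (phi + theta) = 0 -> 0 <= c -> Pi_closed theta c (RtoC r * cis phi)%C.
Proof.
  intros Hcos Hc. change (Pi_level theta (RtoC r * cis phi)%C <= c).
  rewrite Pi_level_polar, Hcos. lra.
Qed.

Lemma continuous_Pi_level (t : C) (theta : R) :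
  continuous (fun th => Pi_level th t) theta.
Proof.
  apply (ex_derive_continuous (K := R_AbsRing) (V := R_NormedModule)).
  unfold Pi_level. auto_derive. easy.
Qed.

Lemma Cmod_cexp (z : C) : Cmod (cexp z) = exp (Re z).
Proof.
  unfold cexp, Cmod; cbn [fst snd].
  replace ((exp (Re z) * cos (Im z)) ^ 2 + (exp (Re z) * sin (Im z)) ^ 2)
    with (exp (Re z) ^ 2)
    by (rewrite <- (Rmult_1_r (exp (Re z) ^ 2)), <- (sin2_cos2 (Im z));
        unfold Rsqr; ring).
  apply sqrt_pow2, Rlt_le, exp_pos.
Qed.

Lemma Cmod_cis (phi : R) : Cmod (cis phi) = 1.
Proof.
  unfold cis, Cmod; cbn [fst snd]. rewrite <- sqrt_1, <- (sin2_cos2 phi).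
  unfold Rsqr. f_equal. ring.
Qed.

Lemma Cmod_ray_point (r theta : R) : 0 <= r -> Cmod (RtoC r * cis theta)%C = r.
Proof. intros Hr. rewrite Cmod_mult, Cmod_cis, Cmod_R, Rabs_pos_eq; lra. Qed.

Lemma Cmod_ray_integrand (P : C -> C) (theta r : R) (t : C) : 0 <= r ->
  Cmod (ray_integrand P theta t r)
  = exp (r * Pi_level theta t) * Cmod (P (RtoC r * cis theta)%C).
Proof.
  intros Hr. unfold ray_integrand.
  rewrite !Cmod_mult, Cmod_cis, Cmod_cexp, Rmult_1_r.
  f_equal. f_equal. unfold Pi_level, cis, RtoC, Re, Im; simpl. ring.
Qed.

Lemma norm_C_R_Cmod (z : C) : @norm R_AbsRing C_R_CompleteNormedModule z = Cmod z.
Proof.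
  unfold norm; simpl. unfold prod_norm, Cmod.
  change (@norm R_AbsRing R_NormedModule) with Rabs. now rewrite !pow2_abs.
Qed.

Lemma is_RInt_gen_exp_neg (m k : R) : k < 0 ->
  is_RInt_gen (fun r => m * exp (k * r)) (at_point 0) (Rbar_locally p_infty)
    (- (m / k)).
Proof.
  intros Hk.
  set (G := fun r => m / k * exp (k * r)).
  assert (HG : forall r, Derive G r = m * exp (k * r)).
  { intros r. apply is_derive_unique. unfold G. auto_derive; [easy | field; lra]. }
  replace (- (m / k)) with (0 - m / k) by ring.
  apply is_RInt_gen_ext with (Derive G).
  { exists (fun _ => True) (fun _ => True); [easy | exists 0; easy |].
    intros x y _ _ z _. now rewrite HG. }
  apply (is_RInt_gen_Derive (Fa := at_point 0) (Fb := Rbar_locally p_infty) G).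
  - exists (fun _ => True) (fun _ => True); [easy | exists 0; easy |].
    intros x y _ _ z _. unfold G. auto_derive. easy.
  - exists (fun _ => True) (fun _ => True); [easy | exists 0; easy |].
    intros x y _ _ z _.
    apply continuous_ext with (fun r => m * exp (k * r)); [now intros; rewrite HG |].
    apply (ex_derive_continuous (K := R_AbsRing) (V := R_NormedModule)).
    auto_derive. easy.
  - intros Q HQ. unfold filtermap, at_point, G.
    rewrite Rmult_0_r, exp_0, Rmult_1_r. now apply locally_singleton.
  - change (is_lim G p_infty 0). unfold G.
    replace (Finite 0) with (Rbar_mult (m / k) 0) by (simpl; f_equal; ring).
    apply is_lim_scal_l. apply is_lim_comp with m_infty; [apply is_lim_exp_m | |].
    + replace m_infty with (Rbar_mult k p_infty).
      * apply is_lim_scal_l, is_lim_id.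
      * simpl. case Rle_dec; intros; [exfalso; lra | easy].
    + exists 0. easy.
Qed.

Section DecayInSector.

Variables (P : C -> C) (alpha beta a m : R).
Hypothesis Hdecay : forall z : C, sector alpha beta z ->
  Cmod (P z) < m * exp (- a * Cmod z).

Lemma sector_decay_const_pos : alpha < beta -> 0 < m.
Proof.
  intros Hab.
  set (z := (RtoC 1 * cis ((alpha + beta) / 2))%C).
  assert (Hz : sector alpha beta z) by (exists 1, ((alpha + beta) / 2); repeat split; lra).
  assert (H := Hdecay z Hz).
  assert (0 < exp (- a * Cmod z)) by apply exp_pos.
  assert (0 <= Cmod (P z)) by apply Cmod_ge_0.
  nra.
Qed.

Lemma Cmod_ray_integrand_le (theta r : R) (t : C) :
  alpha < theta < beta -> 0 < r ->
  Cmod (ray_integrand P theta t r) <= m * exp ((Pi_level theta t - a) * r).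
Proof.
  intros Htheta Hr.
  rewrite Cmod_ray_integrand by lra.
  assert (HP : Cmod (P (RtoC r * cis theta)%C) < m * exp (- a * r)).
  { rewrite <- (Cmod_ray_point r theta) at 2 by lra.
    apply Hdecay. exists r, theta. repeat split; lra. }
  replace ((Pi_level theta t - a) * r) with (r * Pi_level theta t + - a * r) by ring.
  rewrite exp_plus.
  assert (0 < exp (r * Pi_level theta t)) by apply exp_pos.
  nra.
Qed.

Lemma F_theta_bound (theta : R) (t l : C) :
  alpha < theta < beta -> Pi_level theta t < a -> is_F_theta P theta t l ->
  Cmod l <= m / (a - Pi_level theta t).
Proof.
  intros Htheta Hlevel HF.
  set (c := Pi_level theta t) in *.
  assert (Hm : 0 < m) by (apply sector_decay_const_pos; lra).
  (* The integrand at r = 0 lies outside the sector; replace it by 0 there. *)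
  set (f := fun r => if Rlt_dec 0 r then ray_integrand P theta t r else RtoC 0).
  assert (Hf : is_RInt_gen f (at_point 0) (Rbar_locally p_infty) l).
  { apply is_RInt_gen_ext with (ray_integrand P theta t); [| exact HF].
    exists (fun x => x = 0) (fun y => 0 < y); [reflexivity | exists 0; auto |].
    intros x y -> Hy z Hz. simpl in Hz.
    rewrite Rmin_left, Rmax_right in Hz by lra.
    unfold f. destruct (Rlt_dec 0 z); [reflexivity | lra]. }
  replace (m / (a - c)) with (- (m / (c - a))) by (field; lra).
  rewrite <- norm_C_R_Cmod.
  apply (RInt_gen_norm (V := C_R_CompleteNormedModule) (Fa := at_point 0)
           (Fb := Rbar_locally p_infty) f
           (fun r => m * exp ((c - a) * r))); [| | exact Hf | apply is_RInt_gen_exp_neg; lra].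
  - exists (fun x => x = 0) (fun y => 0 < y); [reflexivity | exists 0; auto |].
    intros x y -> Hy. simpl. lra.
  - exists (fun x => x = 0) (fun y => 0 < y); [reflexivity | exists 0; auto |].
    intros x y _ _ z _. rewrite norm_C_R_Cmod. unfold f.
    destruct (Rlt_dec 0 z) as [Hz | Hz]; [now apply Cmod_ray_integrand_le |].
    rewrite Cmod_0. apply Rlt_le, Rmult_lt_0_compat; [exact Hm | apply exp_pos].
Qed.

End DecayInSector.

Lemma continuous_le_of_eventually {T : UniformSpace} (Fl : (T -> Prop) -> Prop)
  {HFl : ProperFilter Fl} (g : T -> R) (x0 : T) (y : R) :
  filter_le Fl (locally x0) -> continuous g x0 ->
  Fl (fun x => g x <= y) -> g x0 <= y.
Proof.
  intros Hle Hg Hev. apply Rnot_lt_le. intros Hlt.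
  assert (Hgt : Fl (fun x => y < g x)) by now apply Hle, Hg, open_gt.
  destruct (filter_ex _ (filter_and _ _ Hev Hgt)) as [x [Hx1 Hx2]]. lra.
Qed.

Lemma at_left_open_interval (alpha beta : R) :
  alpha < beta -> at_left beta (fun x => alpha < x < beta).
Proof.
  intros Hab. unfold at_left, within.
  apply (filter_imp (fun x => alpha < x)); [intros x H1 H2; lra |].
  now apply open_gt.
Qed.

Lemma at_right_open_interval (alpha beta : R) :
  alpha < beta -> at_right alpha (fun x => alpha < x < beta).
Proof.
  intros Hab. unfold at_right, within.
  apply (filter_imp (fun x => x < beta)); [intros x H1 H2; lra |].
  now apply open_lt.
Qed.

Lemma F_bound_on_Pi_closed (P : C -> C) (alpha beta a m theta0 : R) (t l : C)
  (Fl : (R -> Prop) -> Prop) {HFl : ProperFilter Fl} :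
  0 < a ->
  (forall z : C, sector alpha beta z -> Cmod (P z) < m * exp (- a * Cmod z)) ->
  filter_le Fl (locally theta0) -> Fl (fun theta => alpha < theta < beta) ->
  (forall theta, alpha < theta < beta -> Pi_level theta t < a ->
     is_F_theta P theta t l) ->
  Pi_level theta0 t <= a / 2 ->
  Cmod l <= 2 * m / a.
Proof.
  intros Ha Hdecay Hle Hinside HF Hlevel0.
  assert (Hprod : Cmod l * (a - Pi_level theta0 t) <= m).
  { apply (continuous_le_of_eventually Fl (fun th => Cmod l * (a - Pi_level th t))).
    - exact Hle.
    - apply (continuous_mult (K := R_AbsRing)); [apply continuous_const |].
      apply (continuous_minus (V := R_NormedModule));
        [apply continuous_const | apply continuous_Pi_level].
    - assert (Hlevel : Fl (fun theta => Pi_level theta t < a)).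
      { apply Hle, (continuous_Pi_level t theta0 (fun u => u < a)), open_lt. lra. }
      refine (filter_imp _ _ _ (filter_and _ _ Hinside Hlevel)).
      intros theta [Htheta Hlt].
      assert (Hb := F_theta_bound P alpha beta a m Hdecay theta t l Htheta Hlt
                      (HF theta Htheta Hlt)).
      apply Rmult_le_reg_r with (/ (a - Pi_level theta t));
        [apply Rinv_0_lt_compat; lra |].
      rewrite Rmult_assoc, Rinv_r, Rmult_1_r by lra. exact Hb. }
  assert (0 <= Cmod l) by apply Cmod_ge_0.
  apply Rmult_le_reg_r with (a / 2); [lra |].
  replace (2 * m / a * (a / 2)) with m by (field; lra). nra.
Qed.

Lemma filterlim_m_infty_zero_of_bound (f : R -> C) (a m : R) :
  (forall x, x < 0 -> Cmod (f x) <= m / (a - x)) ->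
  filterlim f (Rbar_locally m_infty) (locally (RtoC 0)).
Proof.
  intros Hb.
  apply (filterlim_norm_zero (K := C_AbsRing) (V := C_NormedModule)).
  change (is_lim (fun x => Cmod (f x)) m_infty 0).
  apply (is_lim_le_le_loc (fun _ => 0) (fun x => m / (a - x))).
  - exists 0. intros x Hx. split; [apply Cmod_ge_0 | apply Hb; lra].
  - apply is_lim_const.
  - replace (Finite 0) with (Rbar_div m p_infty) by (simpl; f_equal; field).
    apply (is_lim_div (fun _ => m) (fun x => a - x) m_infty m p_infty); try easy.
    + apply is_lim_const.
    + eapply is_lim_minus; [apply is_lim_const | apply is_lim_id | easy].
Qed.

Lemma F_bound_on_edge_half_planes (P F : C -> C) (a m delta : R) :
  0 < a -> 0 < delta < PI / 2 ->
  (forall z : C, sector (- (PI / 2) + delta) (PI / 2 - delta) z ->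
     Cmod (P z) < m * exp (- a * Cmod z)) ->
  (forall theta, - (PI / 2) + delta < theta < PI / 2 - delta -> forall t,
     Pi_level theta t < a -> is_F_theta P theta t (F t)) ->
  forall t : C,
    Pi_closed (PI / 2 - delta) (a / 2) t \/ Pi_closed (- (PI / 2) + delta) (a / 2) t ->
    Cmod (F t) <= 2 * m / a.
Proof.
  intros Ha Hd Hdecay HF t Ht.
  assert (Hdelta : - (PI / 2) + delta < PI / 2 - delta) by lra.
  destruct Ht as [Ht | Ht].
  - exact (F_bound_on_Pi_closed P _ _ a m _ t (F t) (at_left (PI / 2 - delta))
             Ha Hdecay (filter_le_within (F := locally _) _)
             (at_left_open_interval _ _ Hdelta) (fun theta Htheta => HF theta Htheta t) Ht).
  - exact (F_bound_on_Pi_closed P _ _ a m _ t (F t) (at_right (- (PI / 2) + delta))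
             Ha Hdecay (filter_le_within (F := locally _) _)
             (at_right_open_interval _ _ Hdelta) (fun theta Htheta => HF theta Htheta t) Ht).
Qed.

Theorem mainTheorem6 (P : C -> C) (a : R) (M : R -> R) (F : C -> C)
  (HP : holomorphic_on right_half_plane P)
  (Ha : 0 < a)
  (HM : forall delta : R, 0 < delta < PI / 2 ->
        forall z : C, sector (- (PI / 2) + delta) (PI / 2 - delta) z ->
        Cmod (P z) < M delta * exp (- a * Cmod z))
  (HF : entire F)
  (HFtheta : forall theta : R, - (PI / 2) < theta < PI / 2 ->
        forall t : C, Pi_open theta a t -> is_F_theta P theta t (F t)) :
  (forall delta : R, 0 < delta < PI / 2 ->
     (forall t : C,
        Pi_closed (PI / 2 - delta) (a / 2) t \/
        Pi_closed (- (PI / 2) + delta) (a / 2) t ->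
        Cmod (F t) <= 2 * M delta / a) /\
     (forall s : R,
        Cmod (F (RtoC (Rabs s) * cis delta)%C) <= 2 * M delta / a /\
        Cmod (F (RtoC (Rabs s) * cis (- delta))%C) <= 2 * M delta / a)) /\
  filterlim (fun x : R => F (RtoC x)) (Rbar_locally m_infty) (locally (RtoC 0)).
Proof.
  assert (HFsector : forall delta, 0 < delta < PI / 2 -> forall theta,
            - (PI / 2) + delta < theta < PI / 2 - delta -> forall t,
            Pi_level theta t < a -> is_F_theta P theta t (F t))
    by (intros delta Hd theta Htheta; apply HFtheta; lra).
  assert (Hhalf := fun delta Hd =>
            F_bound_on_edge_half_planes P F a (M delta) delta Ha Hd (HM delta Hd)
              (HFsector delta Hd)).
  split.
  - intros delta Hd. split; [now apply Hhalf |].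
    intros s. split; apply (Hhalf delta Hd); [left | right]; apply Pi_closed_ray; try lra.
    + replace (delta + (PI / 2 - delta)) with (PI / 2) by ring. apply cos_PI2.
    + replace (- delta + (- (PI / 2) + delta)) with (- (PI / 2)) by ring.
      rewrite cos_neg. apply cos_PI2.
  - assert (Hd : 0 < PI / 4 < PI / 2) by (generalize PI_RGT_0; lra).
    apply (filterlim_m_infty_zero_of_bound _ a (M (PI / 4))).
    intros x Hx.
    assert (Hlt : Pi_level 0 (RtoC x) < a) by (rewrite Pi_level_real; lra).
    assert (Hb := F_theta_bound P _ _ a _ (HM _ Hd) 0 (RtoC x) (F (RtoC x))
                    ltac:(lra) Hlt (HFtheta 0 ltac:(lra) (RtoC x) Hlt)).
    now rewrite Pi_level_real in Hb.
Qed.
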